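(* Let $X$ and $Y$ be random variables with $X\ge0$ and $Y\ge1$. Then for every $p>1$, $$\mathbb{E}\,X\log Y\le(\mathbb{E}X^p)^{1/p}\left(\log\mathbb{E}Y+\frac{1}{p-1}\right).$$
   Context: $\log$ denotes the natural logarithm. *)

From HB Require Import structures.
From mathcomp Require Import all_boot all_order all_algebra.
From mathcomp Require Import all_classical all_reals all_analysis.

From HB Require Import structures.
From mathcomp Require Import all_boot all_order all_algebra.
From mathcomp Require Import all_classical all_reals all_analysis.
From mathcomp Require Import measurable_realfun ring lra.
Import Order.TTheory GRing.Theory Num.Theory.
Import numFieldTopology.Exports.
Local Open Scope ring_scope.
Local Open Scope ereal_scope.

(* Hoelder's inequality with the conjugate exponent q = p / (p - 1), for which
   q - 1 = 1 / (p - 1), gives E[X ln Y] <= ||X||_p ||ln Y||_q, so it remains to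
   show ||ln Y||_q <= ln E[Y] + q - 1.  The map w |-> (ln w)^q is concave on
   [e^(q-1), +oo) and ln Y <= ln (e^(q-1) Y) with e^(q-1) Y in that range, so
   Jensen's inequality, through the tangent line at e^(q-1) E[Y], gives
   E[(ln Y)^q] <= (ln E[Y] + q - 1)^q. *)

Section real_inequalities.
Variable R : realType.
Local Open Scope classical_set_scope.
Local Open Scope ring_scope.

Lemma ln_le_subr1 (x : R) : 0 < x -> ln x <= x - 1.
Proof. by move=> x0; have := @le_ln1Dx R (x - 1); rewrite addrCA subrr addr0; apply; lra. Qed.

Lemma powR_le_mul_expR (k a b : R) : 0 < k -> k <= a -> a <= b ->
  b `^ k <= a `^ k * expR (b - a).
Proof.
move=> k0 ka ab; have a0 : 0 < a by lra.
have b0 : 0 < b by lra.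
rewrite /powR !gt_eqF // -expRD ler_expR -lerBlDl -mulrBr -ln_div ?posrE //.
have : ln (b / a) <= (b - a) / a.
  by rewrite mulrBl divff ?gt_eqF // ln_le_subr1 // divr_gt0.
move=> /(ler_wpM2l (ltW k0)) /le_trans; apply.
by rewrite mulrCA ler_piMr ?subr_ge0 // ler_pdivrMr // mul1r.
Qed.

(* With w = e^v, the right-hand side is the tangent line at e^L of the map
   w |-> (ln w)^q, which is concave for w >= e^(q-1). *)
Lemma powR_le_expR_tangent (q L v : R) : 1 < q -> q - 1 <= L -> q - 1 <= v ->
  v `^ q <= L `^ q + q * L `^ (q - 1) * (expR (v - L) - 1).
Proof.
move=> q1 kL kv; set k := q - 1 in kL kv *.
have k0 : 0 < k by rewrite subr_gt0.
have q0 : 0 < q := lt_trans ltr01 q1.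
pose f y := q * L `^ k * expR (- L) * expR y - y `^ q.
have fE y : f y = q * L `^ k * expR (y - L) - y `^ q by rewrite /f expRD; ring.
suff : f L <= f v by rewrite !fE subrr expR0 mulr1; lra.
have df (y : R) : 0 < y -> is_derive y 1 f (q * (L `^ k * expR (y - L) - y `^ k)).
  move=> y0; have -> : q * (L `^ k * expR (y - L) - y `^ k) =
      q * L `^ k * expR (- L) * expR y - q * y `^ (q - 1) by rewrite expRD; ring.
  by apply: is_deriveB; exact: is_derive1_powR.
have f'E (y : R) : 0 < y -> derive1 f y = q * (L `^ k * expR (y - L) - y `^ k).
  by move=> /df dfy; rewrite derive1E derive_val.
have fcont (a b : R) : 0 < a -> {within `[a, b], continuous f}.
  move=> a0; apply: derivable_within_continuous => y.
  by rewrite in_itv /= => /andP[ay _]; have [] := df y (lt_le_trans a0 ay).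
have [vL|Lv] := leP v L.
- apply: (@ler0_derive1_le_cc R f v L _ _ _ L v); last 3 first.
  + by rewrite in_itv /= lexx vL.
  + by rewrite in_itv /= lexx vL.
  + by [].
  + move=> y; rewrite in_itv /= => /andP[vy _].
    by have [] := df y (lt_le_trans k0 (le_trans kv (ltW vy))).
  + move=> y; rewrite in_itv /= => /andP[vy yL].
    have ky : k <= y := le_trans kv (ltW vy).
    rewrite f'E ?(lt_le_trans k0 ky) // pmulr_rle0 // subr_le0.
    by rewrite -ler_pdivlMr ?expR_gt0 // -expRN opprB powR_le_mul_expR // ltW.
  + exact: fcont (lt_le_trans k0 kv).
- apply: (@ger0_derive1_le_cc R f L v _ _ _ L v); last 3 first.
  + by rewrite in_itv /= lexx ltW.
  + by rewrite in_itv /= lexx ltW.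
  + exact: ltW.
  + move=> y; rewrite in_itv /= => /andP[Ly _].
    by have [] := df y (lt_le_trans k0 (le_trans kL (ltW Ly))).
  + move=> y; rewrite in_itv /= => /andP[Ly _].
    rewrite f'E ?(lt_le_trans k0 (le_trans kL (ltW Ly))) //.
    by rewrite mulr_ge0 ?(ltW q0) // subr_ge0 powR_le_mul_expR // ltW.
  + exact: fcont (lt_le_trans k0 kL).
Qed.

Lemma powR_ln_le_affine (q r y : R) : 1 < q -> 1 <= r -> 1 <= y ->
  ln y `^ q + q * (ln r + (q - 1)) `^ (q - 1) <=
  (ln r + (q - 1)) `^ q + q * (ln r + (q - 1)) `^ (q - 1) / r * y.
Proof.
move=> q1 r1 y1; have r0 : 0 < r by lra.
have y0 : 0 < y by lra.
have lnr0 := ln_ge0 r1; have lny0 := ln_ge0 y1.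
have := @powR_le_expR_tangent q (ln r + (q - 1)) (ln y + (q - 1)) q1.
have -> : ln y + (q - 1) - (ln r + (q - 1)) = ln (y / r).
  by rewrite ln_div ?posrE //; ring.
rewrite lnK ?posrE ?divr_gt0 // => /(_ ltac:(lra) ltac:(lra)) tangent.
have shift : ln y `^ q <= (ln y + (q - 1)) `^ q.
  by apply: ge0_ler_powR; rewrite ?nnegrE; lra.
rewrite mulrAC -mulrA; lra.
Qed.

End real_inequalities.

Section Lnorm_expectation.
Context d (T : measurableType d) (R : realType) (P : probability T R).

Lemma Lnorm_expectation (f : T -> R) (p : R) : (forall w, 0 <= f w)%R ->
  'N[P]_p%:E[EFin \o f] = 'E_P[fun w => (f w `^ p)%R] `^ p^-1.
Proof.
move=> f0; rewrite unlock [in RHS]unlock; congr (_ `^ _).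
by apply: eq_integral => w _ /=; rewrite ger0_norm.
Qed.

Lemma Lnorm1_expectation (f : T -> R) : (forall w, 0 <= f w)%R ->
  'N[P]_1[EFin \o f] = 'E_P[f].
Proof.
by move=> f0; rewrite Lnorm1 unlock; apply: eq_integral => w _ /=; rewrite ger0_norm.
Qed.

End Lnorm_expectation.

Section log_moment.
Context d (T : measurableType d) (R : realType) (P : probability T R).
Variables (Y : T -> R) (q : R).
Hypotheses (mY : measurable_fun setT Y) (Y1 : forall w, (1 <= Y w)%R) (q1 : (1 < q)%R).

Let integral_cstP (c : R) : \int[P]_w c%:E = c%:E.
Proof. by rewrite integral_cst // -[RHS]mule1; congr (_ * _); exact: probability_setT. Qed.

Let expectation_ge1 : 1 <= 'E_P[Y].
Proof.
rewrite -(expectation_cst P 1); apply: expectation_le => //.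
- by move=> w; exact: le_trans ler01 (Y1 w).
- exact: aeW.
Qed.

Lemma expectation_powR_ln_le (r : R) : 'E_P[Y] = r%:E ->
  'E_P[fun w => (ln (Y w) `^ q)%R] <= ((ln r + (q - 1)) `^ q)%:E.
Proof.
move=> EY; have r1 : (1 <= r)%R by rewrite -lee_fin -EY.
have Y0 w : (0 <= Y w)%R := le_trans ler01 (Y1 w).
have IY : \int[P]_w (Y w)%:E = r%:E by rewrite -EY unlock.
rewrite unlock.
set L := (ln r + (q - 1))%R; set C := (q * L `^ (q - 1))%R.
have C0 : (0 <= C)%R by rewrite mulr_ge0 ?powR_ge0 // ltW // (lt_trans ltr01 q1).
have mlnY : measurable_fun setT (fun w => ln (Y w)).
  exact: measurableT_comp (@measurable_ln R) mY.
have mlnYq : measurable_fun setT (fun w => ln (Y w) `^ q)%R.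
  exact: measurableT_comp (@measurable_powR R q) mlnY.
suff : \int[P]_w (ln (Y w) `^ q)%:E + C%:E <= (L `^ q)%:E + C%:E by rewrite leeD2rE.
have -> : \int[P]_w (ln (Y w) `^ q)%:E + C%:E = \int[P]_w (ln (Y w) `^ q + C)%:E.
  under [RHS]eq_integral do rewrite EFinD.
  rewrite ge0_integralD ?integral_cstP // => [w _|]; first by rewrite lee_fin powR_ge0.
  exact/measurable_EFinP.
apply: (@le_trans _ _ (\int[P]_w (L `^ q + C / r * Y w)%:E)).
  apply: ge0_le_integral => //.
  - by move=> w _; rewrite lee_fin addr_ge0 // powR_ge0.
  - by apply/measurable_EFinP; apply: measurable_funD.
  - by apply/measurable_EFinP; apply: measurable_funD => //; exact: measurable_funM.
  - by move=> w _; rewrite lee_fin; apply: powR_ln_le_affine.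
under eq_integral do rewrite EFinD EFinM.
rewrite ge0_integralD //.
- rewrite integral_cstP ge0_integralZl_EFin ?IY //.
  + by rewrite -EFinM divfK // gt_eqF //; lra.
  + by move=> w _; rewrite lee_fin.
  + exact/measurable_EFinP.
  + by rewrite divr_ge0 //; lra.
- by move=> w _; rewrite lee_fin powR_ge0.
- by move=> w _; rewrite lee_fin mulr_ge0 // divr_ge0 //; lra.
- by apply/measurable_EFinP; exact: measurable_funM.
Qed.

Lemma Lnorm_ln_le : 'N[P]_q%:E[EFin \o (fun w => ln (Y w))] <= lne 'E_P[Y] + (q - 1)%:E.
Proof.
have q0 : (0 < q)%R := lt_trans ltr01 q1.
rewrite Lnorm_expectation => [|w]; last exact: ln_ge0.
case EY : 'E_P[Y] expectation_ge1 => [r| |] //; last by move=> _; rewrite /= leey.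
rewrite lee_fin => r1; rewrite lne_EFin -?EFinD; last exact: lt_le_trans ltr01 r1.
have q'0 : (0 <= q^-1)%R by rewrite invr_ge0 ltW.
apply: (@le_trans _ _ (((ln r + (q - 1)) `^ q)%:E `^ q^-1)).
  apply: gt0_ler_poweR q'0 _ _ _ _ (expectation_powR_ln_le r EY).
  - by rewrite in_itv /= leey andbT expectation_ge0 // => w; rewrite powR_ge0.
  - by rewrite in_itv /= lee_fin powR_ge0 leey.
rewrite poweR_EFin -powRrM mulfV ?gt_eqF // powRr1 //.
by rewrite addr_ge0 ?ln_ge0 // subr_ge0 ltW.
Qed.

End log_moment.

Theorem lemma1 (d : measure_display) (T : measurableType d) (R : realType)
  (P : probability T R) (X Y : {RV P >-> R})
  (hX : forall w, (0 <= X w)%R) (hY : forall w, (1 <= Y w)%R)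
  (p : R) (hp : (1 < p)%R) :
  'E_P[fun w => (X w * ln (Y w))%R]
    <= ('E_P[fun w => (X w `^ p)%R]) `^ p^-1 * (lne 'E_P[Y] + ((p - 1)^-1)%:E).
Proof.
pose q := (p / (p - 1))%R.
have p0 : (0 < p)%R := lt_trans ltr01 hp.
have p1 : (0 < p - 1)%R by rewrite subr_gt0.
have qE : (q - 1 = (p - 1)^-1)%R by rewrite /q; field; rewrite gt_eqF.
have q1 : (1 < q)%R by rewrite -subr_gt0 qE invr_gt0.
have pq : (p^-1 + q^-1 = 1)%R by rewrite /q invf_div; field; rewrite gt_eqF.
have mlnY : measurable_fun setT (fun w => ln (Y w)).
  exact: measurableT_comp (@measurable_ln R) (measurable_funPT Y).
have := hoelder P (measurable_funPT X) mlnY p0 (lt_trans ltr01 q1) pq.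
rewrite Lnorm1_expectation => [|w]; last by rewrite mulr_ge0 // ln_ge0.
rewrite Lnorm_expectation // => /le_trans; apply.
by rewrite lee_wpmul2l ?poweR_ge0 // -qE Lnorm_ln_le // measurable_funPT.
Qed.
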